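(* Let $R$ be a subring of the field $\bar{\mathbb{Q}}$ of algebraic numbers, let $S\subset\mathbb{N}$ be a $\Leftrightarrow_R$-connected subset, and let $T\subset S$. Suppose that for some $n\in S$ there are infinitely many elements $m\in T$ with $m\Leftrightarrow_R n$. Then the homomorphism $\tau^R_{S,T}\colon R[q]^S\to P_T(R)$ is injective. In particular, if $R$ is a subring of the ring of algebraic integers, then for any subset $T\subset\mathbb{N}$ containing infinitely many prime powers, $\tau^R_{\mathbb{N},T}\colon R[q]^{\mathbb{N}}\to P_T(R)$ is injective.
   Context: All rings are commutative with unit; $q$ is an indeterminate. For $n\in\mathbb{N}$, $\Phi_n(q)$ is the $n$th cyclotomic polynomial. For $S\subset\mathbb{N}$, $\Phi_S^*$ is the multiplicative subset of $\mathbb{Z}[q]$ generated by $\{\Phi_m(q):m\in S\}$, directed by divisibility, and $R[q]^S=\varprojlim_{f\in\Phi_S^*}R[q]/(f)$. For $T\subset S$, $P_T(R)=\prod_{m\in T}R[q]/(\Phi_m(q))$ and $\tau^R_{S,T}\colon R[q]^S\to P_T(R)$ is the homomorphism induced by $f(q)\mapsto (f(q)\bmod \Phi_m(q))_{m\in T}$. A ring $R$ is $p$-adically separated if $\bigcap_{j\ge0}p^jR=(0)$. For $m,m'\in\mathbb{N}$ write $m\Leftrightarrow_R m'$ if $m=m'$, or $m/m'$ is an integer power (positive or negative exponent) of a prime $p$ with $R$ $p$-adically separated, or $R=\{0\}$. A subset $S\subset\mathbb{N}$ is $\Leftrightarrow_R$-connected if it is nonempty and any two elements are joined by a finite chain in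 $S$ with consecutive elements related by $\Leftrightarrow_R$. *)

From HB Require Import structures.
From mathcomp Require Import all_boot all_order all_algebra all_field.
Set Implicit Arguments. Unset Strict Implicit. Unset Printing Implicit Defensive.
Import Order.TTheory GRing.Theory Num.Theory.
Local Open Scope ring_scope.

(* algC plays the role of the field Qbar of algebraic numbers.
   A subring R of Qbar is a predicate R : {pred algC} with subring_closed R. *)

Definition Phi (n : nat) : {poly int} := 'Phi_n.

Definition toC (f : {poly int}) : {poly algC} := map_poly (fun z : int => z%:~R) f.

Definition inPhiS (S : nat -> Prop) (f : {poly int}) : Prop :=
  exists s : seq nat, (forall m, m \in s -> S m) /\ f = \prod_(m <- s) Phi m.

Definition dvdZ (f g : {poly int}) : Prop := exists h : {poly int}, g = h * f.

Definition congR (R : {pred algC}) (f : {poly int}) (a b : {poly algC}) : Prop :=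
  exists k : {poly algC}, k \is a polyOver R /\ a - b = k * toC f.

(* Elements of R[q]^S = lim_{f in Phi_S^*} R[q]/(f), represented as compatible
   families of representatives x f in R[q]. *)
Definition inLim (R : {pred algC}) (S : nat -> Prop) (x : {poly int} -> {poly algC}) : Prop :=
  (forall f, inPhiS S f -> x f \is a polyOver R) /\
  (forall f g, inPhiS S f -> inPhiS S g -> dvdZ f g -> congR R f (x g) (x f)).

Definition limEq (R : {pred algC}) (S : nat -> Prop) (x y : {poly int} -> {poly algC}) : Prop :=
  forall f, inPhiS S f -> congR R f (x f) (y f).

(* tau^R_{S,T} x = tau^R_{S,T} y in P_T(R) *)
Definition tauEq (R : {pred algC}) (T : nat -> Prop) (x y : {poly int} -> {poly algC}) : Prop :=
  forall m, T m -> congR R (Phi m) (x (Phi m)) (y (Phi m)).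

Definition tau_injective (R : {pred algC}) (S T : nat -> Prop) : Prop :=
  forall x y, inLim R S x -> inLim R S y -> tauEq R T x y -> limEq R S x y.

Definition padic_sep (R : {pred algC}) (p : nat) : Prop :=
  forall x, x \in R -> (forall j : nat, exists2 y, y \in R & x = (p ^ j)%:R * y) -> x = 0.

Definition relR (R : {pred algC}) (m m' : nat) : Prop :=
  m = m' \/
  (exists p k : nat, prime p /\ padic_sep R p /\ (m = m' * p ^ k \/ m' = m * p ^ k))%N \/
  (forall x, x \in R -> x = 0).

Inductive chainR (R : {pred algC}) (S : nat -> Prop) : nat -> nat -> Prop :=
| chainR_refl a : S a -> chainR R S a a
| chainR_step a b c : S a -> relR R a b -> chainR R S b c -> chainR R S a c.

Definition connectedR (R : {pred algC}) (S : nat -> Prop) : Prop :=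
  (exists n, S n) /\ (forall a b, S a -> S b -> chainR R S a b).

Definition prime_power (m : nat) : Prop := exists p k : nat, prime p /\ (0 < k)%N /\ m = (p ^ k)%N.

From HB Require Import structures.
From mathcomp Require Import all_boot all_order all_algebra all_field.
From mathcomp Require Import zify ring.
From Stdlib Require Import Classical.
Set Implicit Arguments. Unset Strict Implicit. Unset Printing Implicit Defensive.
Import Order.TTheory GRing.Theory Num.Theory.
Local Open Scope ring_scope.

(* Put [z = x - y]. As the [Phi_m] are pairwise coprime, it suffices that [z]
   vanishes modulo every [Phi_m ^+ E], [m] in [S]. The basic tool: if some [G] in
   [Phi_S^*] lies in the ideal [(N, Phi_m ^+ E)] of [Z[q]] and [z] vanishes modulo [G],
   then [z] is [N] times something modulo [Phi_m ^+ E]; when this happens for [N] in a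
   family of integers that no nonzero element of [R] is divisible by throughout, [z]
   vanishes modulo [Phi_m ^+ E]. Modulo [p], [Phi_(n * p ^ k)] is a power [Phi_n ^+ d]
   with [d >= (p - 1) * p ^ (k - 1)], so if [m <=>_R m'] a power of [Phi_m'] lies in
   [(p, Phi_m)], hence powers of it in [(p ^ r, Phi_m ^+ E)], and vanishing travels along
   [<=>_R]-chains. At the given [n], the infinitely many [m = n * p ^ k] in [T] supply
   either products of distinct [Phi_m] in [(p ^ r, Phi_n ^+ E)] for one prime [p], or
   single [Phi_m] in [(p, Phi_n ^+ E)] for arbitrarily large primes [p]; the latter
   suffices because every nonzero element of [R] divides a nonzero integer. *)

Lemma prim_root_order_inj (R : nzRingType) (m1 m2 : nat) (x : R) :
  m1.-primitive_root x -> m2.-primitive_root x -> m1 = m2.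
Proof.
move=> x_m1 x_m2; apply/eqP; rewrite eqn_dvd.
rewrite (prim_order_dvd x_m1) (prim_order_dvd x_m2).
by rewrite (prim_expr_order x_m1) (prim_expr_order x_m2) eqxx.
Qed.

Lemma cyclotomic_dvdp (F : fieldType) (m : nat) (z : F) (Q : {poly F}) :
  m.-primitive_root z -> (forall x, m.-primitive_root x -> root Q x) ->
  cyclotomic z m %| Q.
Proof.
move=> z_m rootQ.
have -> : cyclotomic z m =
    \prod_(x <- [seq z ^+ k | k : 'I_m in [pred k : 'I_m | coprime k m]]) ('X - x%:P).
  by rewrite big_image.
apply: uniq_roots_dvdp.
  by apply/allP => _ /imageP[k /= k_m ->]; rewrite rootQ ?prim_root_exp_coprime.
rewrite uniq_rootsE map_inj_in_uniq ?enum_uniq // => i j _ _ /eqP.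
by rewrite (eq_prim_root_expr z_m) !modn_small // => /eqP/val_inj.
Qed.

Lemma coprimep_cyclotomic (F : closedFieldType) (a b : nat) (za zb : F) :
  a.-primitive_root za -> b.-primitive_root zb -> a != b ->
  coprimep (cyclotomic za a) (cyclotomic zb b).
Proof.
move=> za_a zb_b a_b; apply/negPn/negP => /closed_rootP[x x_root].
have := root_dvdp (dvdp_gcdl _ _) x_root; rewrite (root_cyclotomic za_a) => x_a.
have := root_dvdp (dvdp_gcdr _ _) x_root; rewrite (root_cyclotomic zb_b) => x_b.
by rewrite (prim_root_order_inj x_a x_b) eqxx in a_b.
Qed.

Lemma totientM_prime (n p : nat) : prime p -> (0 < n)%N ->
  totient (n * p) = (totient n * (if p %| n then p else p.-1))%N.
Proof.
move=> p_pr n_gt0; case: ifP => p_n; last first.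
  by rewrite totient_coprime ?(totient_prime p_pr) // coprime_sym prime_coprime ?p_n.
have [m m_p ->] := pfactor_coprime p_pr n_gt0.
have m_p' : coprime m (p ^ (logn p n).+1) by rewrite coprime_sym coprimeXl // coprime_sym.
have m_pn : coprime m (p ^ logn p n) by rewrite coprime_sym coprimeXl // coprime_sym.
have lognp_gt0 : (0 < logn p n)%N by rewrite logn_gt0 mem_primes p_pr n_gt0.
rewrite -mulnA -expnSr !totient_coprime // !totient_pfactor //= -!mulnA.
by rewrite -expnSr prednK.
Qed.

Local Notation intrC := (map_poly (intr : int -> algC)).
Local Notation redp p := (map_poly (intr : int -> 'F_p)).

(* The roots of ['Phi_n \Po 'X^p] are the [x] with [x ^+ p] a primitive [n]-th root:
   the primitive [n * p]-th roots and, when [p] does not divide [n], the primitive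
   [n]-th roots; the degrees match by [totientM_prime]. *)
Lemma Cintr_Cyclotomic_comp_prime (n p : nat) : prime p -> (0 < n)%N ->
  intrC 'Phi_(n * p) * (if (p %| n)%N then 1 else intrC 'Phi_n) = intrC 'Phi_n \Po 'X^p.
Proof.
move=> p_pr n_gt0; have p_gt1 := prime_gt1 p_pr.
have prim_expp (x : algC) : (n * p).-primitive_root x -> n.-primitive_root (x ^+ p).
  by move=> x_np; have := dvdn_prim_root x_np (dvdn_mulr p (dvdnn n)); rewrite mulKn.
have np_gt0 : (0 < n * p)%N by rewrite muln_gt0 n_gt0 prime_gt0.
have [z z_np] := C_prim_root_exists np_gt0.
have zp_n := prim_expp z z_np.
rewrite (Cintr_Cyclotomic z_np) (Cintr_Cyclotomic zp_n).
set B := cyclotomic (z ^+ p) n \Po 'X^p.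
have rootB x : root B x = n.-primitive_root (x ^+ p).
  by rewrite /root horner_comp hornerXn -/(root _ _) (root_cyclotomic zp_n).
have size_Xp : size ('X^p : {poly algC}) = p.+1 by rewrite size_polyXn.
have B_monic : B \is monic.
  rewrite monicE lead_coef_comp ?size_Xp ?ltnS ?prime_gt0 //.
  by rewrite lead_coefXn expr1n mulr1 -monicE cyclotomic_monic.
have size_B : size B = (totient n * p).+1.
  have := size_comp_poly (cyclotomic (z ^+ p) n) 'X^p.
  rewrite size_cyclotomic size_Xp /= => <-.
  by rewrite prednK // lt0n size_poly_eq0 (monic_neq0 B_monic).
have cyc_np_B : cyclotomic z (n * p) %| B.
  by apply: cyclotomic_dvdp z_np _ => x /prim_expp; rewrite rootB.
apply/eqP; rewrite -eqp_monic ?B_monic //; last first.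
  by case: ifP => _; rewrite ?mulr1 ?monicMr cyclotomic_monic.
case: ifP => p_n; rewrite ?mulr1 -dvdp_size_eqp //.
- by rewrite size_B size_cyclotomic totientM_prime // p_n.
- rewrite size_mul ?monic_neq0 ?cyclotomic_monic // !size_cyclotomic size_B /=.
  by rewrite totientM_prime // p_n addnS -mulnSr prednK ?prime_gt0.
rewrite Gauss_dvdp ?cyc_np_B /=.
  apply: cyclotomic_dvdp zp_n _ => x x_n; rewrite rootB prim_root_exp_coprime //.
  by rewrite prime_coprime // p_n.
apply: coprimep_cyclotomic z_np zp_n _; rewrite -{2}(muln1 n) eqn_pmul2l //.
by rewrite neq_ltn p_gt1 orbT.
Qed.

Lemma Cyclotomic_comp_prime (n p : nat) : prime p -> (0 < n)%N ->
  'Phi_(n * p) * (if (p %| n)%N then 1 else 'Phi_n) = 'Phi_n \Po 'X^p.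
Proof.
move=> p_pr n_gt0; apply: (map_inj_poly (intr_inj : injective (intr : int -> algC))) => //.
rewrite rmorphM map_comp_poly map_polyXn -Cintr_Cyclotomic_comp_prime //.
by case: ifP; rewrite ?rmorph1.
Qed.

Lemma Fp_poly_exprp (p : nat) (g : {poly 'F_p}) : prime p ->
  g ^+ p = g \Po 'X^p.
Proof.
move=> p_pr; have p_char : [pchar {poly 'F_p}].-nat p.
  by rewrite pnatE // pchar_poly pchar_Fp.
elim/poly_ind: g => [|g c IHg].
  by rewrite expr0n comp_poly0 gtn_eqF ?prime_gt0.
rewrite exprDn_pchar // exprMn IHg comp_polyD comp_polyM comp_polyX comp_polyC.
by rewrite -rmorphXn /=; have := expf_card c; rewrite card_Fp // => ->.
Qed.

Lemma redp_eq0 (p : nat) (g : {poly int}) : prime p ->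
  redp p g = 0 -> exists a : {poly int}, g = p%:R * a.
Proof.
move=> p_pr g_p; suff /polyOver_dvdzP[a ->] : g \is a polyOver (dvdz p).
  by exists a; rewrite -mul_polyC -natz rmorph_nat.
apply/polyOverP => i; have := congr1 (coefp i) g_p; rewrite /= coef_map coef0.
case: g`_i => m; rewrite ?NegzE ?mulrNz => /eqP.
all: by rewrite ?oppr_eq0 -val_eqE /= val_Fp_nat.
Qed.

Lemma redp_Cyclotomic_mul_prime (n p : nat) : prime p -> (0 < n)%N ->
  redp p 'Phi_(n * p) = redp p 'Phi_n ^+ (if (p %| n)%N then p else p.-1).
Proof.
move=> p_pr n_gt0; have := congr1 (redp p) (Cyclotomic_comp_prime p_pr n_gt0).
rewrite rmorphM map_comp_poly map_polyXn -Fp_poly_exprp //.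
have Phin_neq0 : redp p 'Phi_n != 0 by rewrite monic_neq0 ?monic_map ?Cyclotomic_monic.
case: ifP => _; first by rewrite rmorph1 mulr1.
by move=> eq_p; apply: (mulIf Phin_neq0); rewrite eq_p -exprSr prednK ?prime_gt0.
Qed.

Lemma redp_Cyclotomic_mul_prime_exp (n p k : nat) : prime p -> (0 < n)%N ->
  exists2 d, (p.-1 * p ^ k <= d)%N & redp p 'Phi_(n * p ^ k.+1) = redp p 'Phi_n ^+ d.
Proof.
move=> p_pr n_gt0; elim: k => [|k [d le_d eq_d]].
  rewrite expn1 muln1 redp_Cyclotomic_mul_prime //.
  by exists (if (p %| n)%N then p else p.-1); first by case: ifP => // _; rewrite leq_pred.
exists (d * p)%N; first by rewrite expnSr mulnA leq_mul2r le_d orbT.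
have npk_gt0 : (0 < n * p ^ k.+1)%N by rewrite muln_gt0 n_gt0 expn_gt0 prime_gt0.
rewrite expnSr mulnA redp_Cyclotomic_mul_prime // dvdn_mull ?dvdn_exp //.
by rewrite eq_d -exprM.
Qed.

Lemma Cyclotomic_mul_prime_exp_congr (n p k : nat) : prime p -> (0 < n)%N ->
  exists2 d, (p.-1 * p ^ k <= d)%N &
    exists a : {poly int}, 'Phi_(n * p ^ k.+1) = 'Phi_n ^+ d + p%:R * a.
Proof.
move=> p_pr n_gt0; have [d le_d eq_d] := redp_Cyclotomic_mul_prime_exp k p_pr n_gt0.
exists d => //; have [|a eq_a] := @redp_eq0 p ('Phi_(n * p ^ k.+1) - 'Phi_n ^+ d) p_pr.
  by rewrite rmorphB rmorphXn /= eq_d subrr.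
by exists a; rewrite -eq_a addrC subrK.
Qed.

Definition in_ideal (A : comNzRingType) (N : nat) (M g : A) : Prop :=
  exists a b : A, g = N%:R * a + M * b.

Section Ideal.
Variable A : comNzRingType.
Implicit Types (N : nat) (M g : A).

Lemma in_ideal1 M : in_ideal 1 M 1.
Proof. by exists 1, 0; rewrite mulr0 addr0 mulr1. Qed.

Lemma in_idealM N1 N2 M g1 g2 :
  in_ideal N1 M g1 -> in_ideal N2 M g2 -> in_ideal (N1 * N2) M (g1 * g2).
Proof.
move=> [a1 [b1 ->]] [a2 [b2 ->]].
exists (a1 * a2), (N1%:R * a1 * b2 + b1 * (N2%:R * a2 + M * b2)).
by rewrite natrM; ring.
Qed.

Lemma in_ideal_prod (I : eqType) (s : seq I) N M (g : I -> A) :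
  {in s, forall i, in_ideal N M (g i)} -> in_ideal (N ^ size s) M (\prod_(i <- s) g i).
Proof.
elim: s => [|i s IHs] gNM; first by rewrite big_nil; apply: in_ideal1.
rewrite big_cons expnS; apply: in_idealM; first by apply: gNM; rewrite mem_head.
by apply: IHs => j j_s; apply: gNM; rewrite inE j_s orbT.
Qed.

Lemma in_idealX N M g r : in_ideal N M g -> in_ideal (N ^ r) M (g ^+ r).
Proof.
move=> gNM; elim: r => [|r IHr]; first exact: in_ideal1.
by rewrite expnS exprS; apply: in_idealM.
Qed.

Lemma in_ideal_exp N M g E : in_ideal N M g -> in_ideal N (M ^+ E) (g ^+ E).
Proof.
move=> [a [b def_g]].
exists (a * \sum_(i < E) g ^+ (E.-1 - i) * (M * b) ^+ i), (b ^+ E).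
have := subrXX g (M * b) E; rewrite {2}def_g addrK mulrA => <-.
by rewrite -exprMn subrK.
Qed.

Lemma in_ideal_expr_add N M g d a E :
  g = M ^+ d + N%:R * a -> (E <= d)%N -> in_ideal N (M ^+ E) g.
Proof.
move=> -> le_E_d; exists a, (M ^+ (d - E)).
by rewrite -exprD subnKC // addrC.
Qed.

End Ideal.

Lemma dvdp_prod_coprime (F : idomainType) (I : eqType) (s : seq I)
    (P : I -> {poly F}) (w : {poly F}) :
  uniq s -> {in s &, forall i j, i != j -> coprimep (P i) (P j)} ->
  {in s, forall i, P i %| w} -> \prod_(i <- s) P i %| w.
Proof.
elim: s => [|i s IHs] /=; first by rewrite big_nil dvd1p.
case/andP => i_s s_uniq coP dvdP; rewrite big_cons Gauss_dvdp.
  rewrite dvdP ?mem_head // IHs // => [j k j_s k_s | j j_s]; last first.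
    by rewrite dvdP // inE j_s orbT.
  by apply: coP; rewrite inE ?j_s ?k_s orbT.
rewrite big_seq; apply: (big_ind (coprimep (P i))) => [|u v|j j_s]; first exact: coprimep1.
  by rewrite coprimepMr => ->.
apply: coP; rewrite ?inE ?eqxx ?j_s ?orbT //.
by apply: contraNneq i_s => ->.
Qed.

Section PhiS.
Variable S : nat -> Prop.

Lemma inPhiS1 : inPhiS S 1.
Proof. by exists [::]; rewrite big_nil. Qed.

Lemma inPhiSM f g : inPhiS S f -> inPhiS S g -> inPhiS S (f * g).
Proof.
move=> [s1 [S_s1 ->]] [s2 [S_s2 ->]]; exists (s1 ++ s2); rewrite big_cat.
by split=> // m; rewrite mem_cat => /orP[/S_s1 | /S_s2].
Qed.

Lemma inPhiSX f e : inPhiS S f -> inPhiS S (f ^+ e).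
Proof.
move=> Sf; elim: e => [|e IHe]; first exact: inPhiS1.
by rewrite exprS; apply: inPhiSM.
Qed.

Lemma inPhiS_Phi m : S m -> inPhiS S (Phi m).
Proof. by move=> Sm; exists [:: m]; rewrite big_seq1; split=> // k /[!inE] /eqP ->. Qed.

Lemma inPhiS_monic f : inPhiS S f -> f \is monic.
Proof. by case=> s [_ ->]; apply: monic_prod => m _; apply: Cyclotomic_monic. Qed.

End PhiS.

Lemma dvdZ_mulr f g : dvdZ f (f * g).
Proof. by exists g; rewrite mulrC. Qed.

Lemma dvdZ_mull f g : dvdZ g (f * g).
Proof. by exists f. Qed.

Lemma dvdZ_trans f g h : dvdZ f g -> dvdZ g h -> dvdZ f h.
Proof. by move=> [a ->] [b ->]; exists (b * a); rewrite mulrA. Qed.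

HB.instance Definition _ := GRing.RMorphism.copy toC (map_poly (intr : int -> algC)).

Lemma coprimep_toC_Phi a b : (0 < a)%N -> (0 < b)%N -> a != b ->
  coprimep (toC (Phi a)) (toC (Phi b)).
Proof.
move=> a_gt0 b_gt0 ab.
have [[za za_a] [zb zb_b]] := (C_prim_root_exists a_gt0, C_prim_root_exists b_gt0).
rewrite /toC /Phi (Cintr_Cyclotomic za_a) (Cintr_Cyclotomic zb_b).
exact: coprimep_cyclotomic.
Qed.

Lemma unbounded_pairs (P : nat -> nat -> Prop) :
  (forall B, exists p k, P p k /\ (B < p) || (B < k))%N ->
  (forall r, exists p k, (r < p)%N /\ P p k) \/
  (exists p, forall K, exists2 k, (K < k)%N & P p k).
Proof.
move=> P_large; have [|no_p] := classic (exists p, forall K, exists2 k, (K < k)%N & P p k).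
  by right.
left=> r; apply: NNPP => no_r.
have ub_k p : exists K, forall k, P p k -> (k <= K)%N.
  apply: NNPP => no_K; apply: no_p; exists p => K; apply: NNPP => no_k.
  apply: no_K; exists K => k Pk; rewrite leqNgt; apply/negP => lt_K_k.
  by apply: no_k; exists k.
have [K ub_K] : exists K, forall p k, (p <= r)%N -> P p k -> (k <= K)%N.
  elim: r {no_r} => [|r [K1 ub_K1]].
    by have [K ub] := ub_k 0%N; exists K => p k; rewrite leqn0 => /eqP ->; apply: ub.
  have [K2 ub_K2] := ub_k r.+1; exists (maxn K1 K2) => p k.
  rewrite leq_eqVlt => /orP[/eqP -> Pk | lt_p Pk]; rewrite leq_max.
    by rewrite (ub_K2 k Pk) orbT.
  by rewrite (ub_K1 p k lt_p Pk).
have [p [k [Pk large_pk]]] := P_large (maxn r K).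
have le_p_r : (p <= r)%N by rewrite leqNgt; apply/negP => lt_r_p; apply: no_r; exists p, k.
by move: large_pk (ub_K p k le_p_r Pk); lia.
Qed.

Section Subring.
Variable R : {pred algC}.
Hypothesis R_subring : subring_closed R.
HB.instance Definition _ := GRing.isSubringClosed.Build algC R R_subring.

Lemma toC_polyOver f : toC f \is a polyOver R.
Proof. by apply/polyOverP => i; rewrite coef_map rpred_int. Qed.

Lemma polyOver_edivp_monic (M g : {poly algC}) :
  M \is monic -> M \is a polyOver R -> g \is a polyOver R ->
  exists q r, [/\ q \is a polyOver R, r \is a polyOver R, g = q * M + r
                & (size r < size M)%N].
Proof.
move=> M_monic RM; have M_gt0 : (0 < size M)%N by rewrite lt0n size_poly_eq0 monic_neq0.
elim/poly_ind: g => [|g c IHg] Rg.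
  by exists 0, 0; split; rewrite ?mul0r ?addr0 ?rpred0 ?size_poly0.
have /polyOverP Rg_i := Rg.
have [Rg' Rc] : g \is a polyOver R /\ c \in R.
  split; last by have := Rg_i 0%N; rewrite coefD coefMX coefC /= add0r.
  by apply/polyOverP => i; have := Rg_i i.+1; rewrite coefD coefMX coefC addr0.
have [q [r [Rq Rr -> lt_r_M]]] := IHg Rg'.
set h := r * 'X + c%:P; set a := h`_(size M).-1.
have Rh : h \is a polyOver R by rewrite rpredD ?rpredM ?polyOverX ?polyOverC.
have le_h_M : (size h <= size M)%N.
  by rewrite /h size_MXaddC; case: ifP.
exists (q * 'X + a%:P), (h - a%:P * M); split.
- by rewrite rpredD ?rpredM ?polyOverX ?polyOverC //; apply/polyOverP.
- by rewrite rpredB ?rpredM ?polyOverC //; apply/polyOverP.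
- rewrite [in RHS]mulrDl -[in RHS]addrA [_ + (h - _)]addrC subrK /h.
  by rewrite mulrDl -!mulrA (mulrC M) addrA.
apply: (@leq_ltn_trans (size M).-1); last by rewrite ltn_predL.
apply/leq_sizeP => j le_j.
rewrite coefB coefCM; move: le_j; rewrite leq_eqVlt => /orP[/eqP <- | lt_j].
  by rewrite -lead_coefE (monicP M_monic) mulr1 subrr.
have le_M_j : (size M <= j)%N by lia.
by rewrite (nth_default _ le_M_j) (nth_default _ (leq_trans le_h_M le_M_j)) mulr0 subr0.
Qed.

Lemma polyOver_divp_monic (M g : {poly algC}) :
  M \is monic -> M \is a polyOver R -> g \is a polyOver R ->
  g %/ M \is a polyOver R /\ g %% M \is a polyOver R.
Proof.
move=> M_monic RM Rg; have [q [r [Rq Rr -> lt_r_M]]] := polyOver_edivp_monic M_monic RM Rg.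
by rewrite divp_addl_mul_small // modp_addl_mul_small.
Qed.

Lemma congR_dvdp (f : {poly int}) (a b : {poly algC}) : f \is monic ->
  a \is a polyOver R -> b \is a polyOver R -> congR R f a b <-> toC f %| a - b.
Proof.
move=> f_monic Ra Rb; split=> [[k [_ ->]] | f_ab]; first exact: dvdp_mull.
exists ((a - b) %/ toC f); rewrite divpK //; split=> //.
by case: (polyOver_divp_monic (monic_map _ f_monic) (toC_polyOver f) (rpredB Ra Rb)).
Qed.

(* Clearing the powers of [X] from an integral equation of [c != 0] leaves one with
   nonzero constant term [a], and [a = c * t] with [t] an integral polynomial in [c]. *)
Lemma nonzero_dvd_int (c : algC) : c \in R -> c != 0 ->
  exists2 a : int, a != 0 & exists2 t, t \in R & a%:~R = c * t.
Proof.
move=> Rc c_neq0; have [p [_ p_monic] p_min] := minCpolyP c.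
have [q [b b_neq0 def_p]] := rat_poly_scale p.
have q_neq0 : q != 0.
  apply: contraTneq p_monic => q0.
  by rewrite def_p q0 rmorph0 scaler0 monicE lead_coef0 eq_sym oner_eq0.
have q_c : root (map_poly (intr : int -> algC) q) c.
  have := p_min p; rewrite dvdpp def_p map_polyZ /= rootZ ?fmorph_eq0 ?invr_eq0 ?intr_eq0 //.
  by rewrite -map_poly_comp (eq_map_poly (rmorph_int _)).
have [m [Q /implyP/(_ q_neq0) Q0_neq0 def_q]] := multiplicity_XsubC q 0.
pose QC := map_poly (intr : int -> algC) Q.
have QC_c : QC.[c] = 0.
  move: q_c; rewrite def_q rmorphM rmorphXn /= rmorphB /= map_polyX map_polyC /=.
  rewrite /root hornerM horner_exp hornerXsubC rmorph0 subr0 mulf_eq0 expf_eq0.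
  by rewrite (negPf c_neq0) andbF orbF => /eqP.
exists Q`_0; first by move: Q0_neq0; rewrite /root horner_coef0.
have def_QC : QC = Poly (behead QC) * 'X + (QC`_0)%:P.
  by rewrite -cons_poly_def -{1}[QC]polyseqK; case: (polyseq QC) => [|u s] //=;
     rewrite cons_poly_def polyC0 mul0r add0r.
exists (- (Poly (behead QC)).[c]).
  rewrite rpredN rpred_horner //; apply/polyOverP => i.
  by rewrite coef_Poly nth_behead coef_map rpred_int.
move: QC_c; rewrite {1}def_QC hornerD hornerMX hornerC => /eqP.
by rewrite addrC addr_eq0 coef_map => /eqP ->; rewrite mulrN mulrC.
Qed.

Definition separating (Ns : nat -> nat -> Prop) := forall c, c \in R ->
  (forall r, exists2 N, Ns r N & exists2 y, y \in R & c = N%:R * y) -> c = 0.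

Lemma separating_expn p : padic_sep R p -> separating (fun r N => N = (p ^ r)%N).
Proof. by move=> p_sep c Rc c_p; apply: p_sep => // j; have [_ -> ] := c_p j. Qed.

(* A prime [N > |a|] is invertible modulo [a], so [c = N * y] with [c | a] makes [N]
   a unit of [R]. *)
Lemma separating_large_primes :
  separating (fun r N => [/\ prime N, (r < N)%N & padic_sep R N]).
Proof.
move=> c Rc c_N; apply/eqP/negPn/negP => c_neq0.
have [a a_neq0 [t Rt def_a]] := nonzero_dvd_int Rc c_neq0.
have [N [N_pr lt_a_N N_sep] [y Ry def_c]] := c_N `|a|%N.
have /eqP a_N : coprimez a N%:Z.
  rewrite coprimezE /= coprime_sym prime_coprime //.
  by apply: contraTN lt_a_N => /dvdn_leq; rewrite absz_gt0 a_neq0 -leqNgt => ->.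
have [u [v]] := Bezoutz a N%:Z; rewrite a_N => euv.
set w := u%:~R * y * t + v%:~R.
have Rw : w \in R by rewrite rpredD ?rpredM ?rpred_int.
have N_w : 1 = N%:R * w.
  have /esym := congr1 (intr : int -> algC) euv.
  rewrite rmorph1 rmorphD !rmorphM /= def_a def_c => e1; apply: etrans e1 _.
  by rewrite /w -[(N%:Z)%:~R]/(N%:R : algC); ring.
have /eqP : (1 : algC) = 0.
  apply: N_sep => [|j]; first exact: rpred1.
  by exists (w ^+ j); rewrite ?rpredX // natrX -exprMn -N_w expr1n.
by rewrite oner_eq0.
Qed.

(* If [c = p ^ j * y] divides [a = c * t] with [j = |a|], then [y * t = a / p ^ j]
   is a rational algebraic integer, hence an integer, and [p ^ j > |a|] divides [a]. *)
Lemma padic_sep_Aint p : {subset R <= Aint} -> prime p -> padic_sep R p.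
Proof.
move=> R_Aint p_pr c Rc c_p; apply/eqP/negPn/negP => c_neq0.
have [a a_neq0 [t Rt def_a]] := nonzero_dvd_int Rc c_neq0.
set j := `|a|%N; have [y Ry def_c] := c_p j.
have pj_neq0 : (p ^ j)%:R != 0 :> algC by rewrite pnatr_eq0 -lt0n expn_gt0 prime_gt0.
have : y * t \in Num.int.
  apply: Cint_rat_Aint; last by apply: R_Aint; rewrite rpredM.
  have -> : y * t = a%:~R / (p ^ j)%:R by rewrite def_a def_c; field.
  by rewrite rpred_div ?rpred_int ?rpred_nat.
case/intrP => b def_b.
have def_a' : a = (p ^ j)%:Z * b.
  by apply: (@intr_inj algC); rewrite def_a def_c -mulrA def_b rmorphM.
have b_neq0 : b != 0 by apply: contraNneq a_neq0 => b0; rewrite def_a' b0 mulr0.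
have : (p ^ j <= j)%N.
  by rewrite {2}/j def_a' abszM /= leq_pmulr ?absz_gt0.
by rewrite leqNgt ltn_expl ?prime_gt1.
Qed.

Lemma dvdp_separating (M : {poly int}) (w : {poly algC}) (Ns : nat -> nat -> Prop) :
  M \is monic -> w \is a polyOver R -> separating Ns ->
  (forall r, exists2 N, Ns r N &
     exists2 u, u \is a polyOver R & toC M %| w - N%:R *: u) ->
  toC M %| w.
Proof.
move=> M_monic Rw Ns_sep w_N; have tM_monic : toC M \is monic := monic_map _ M_monic.
have RMdiv g := polyOver_divp_monic (g := g) tM_monic (toC_polyOver M).
apply/modp_eq0P/polyP => i; rewrite coef0; apply: Ns_sep.
  by have [_ /polyOverP] := RMdiv _ Rw.
move=> r; have [N Ns_N [u Ru /modp_eq0P w_u]] := w_N r; exists N => //.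
exists ((u %% toC M)`_i); first by have [_ /polyOverP] := RMdiv _ Ru.
move/eqP: w_u; rewrite modpD modpN modpZl subr_eq0 => /eqP ->.
by rewrite coefZ.
Qed.

Lemma relR_ltn m n : relR R m n -> (n < m)%N ->
  exists p k, [/\ prime p, padic_sep R p & m = (n * p ^ k.+1)%N].
Proof.
case=> [-> | [[p [[|k] [p_pr [p_sep [def_m | def_n]]]]] | R0]] lt_nm.
- by rewrite ltnn in lt_nm.
- by rewrite def_m expn0 muln1 ltnn in lt_nm.
- by rewrite def_n expn0 muln1 ltnn in lt_nm.
- by exists p, k.
- by move: lt_nm; rewrite def_n ltnNge leq_pmulr ?expn_gt0 ?prime_gt0.
- by have /eqP := R0 1 (rpred1 _); rewrite oner_eq0.
Qed.

Section Vanishing.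
Variables (S T : nat -> Prop) (x y : {poly int} -> {poly algC}).
Hypotheses (S_gt0 : forall m, S m -> (0 < m)%N) (T_S : forall m, T m -> S m).
Hypotheses (x_lim : inLim R S x) (y_lim : inLim R S y) (xy_T : tauEq R T x y).

Let z f := x f - y f.

Lemma z_polyOver f : inPhiS S f -> z f \is a polyOver R.
Proof. by move=> Sf; rewrite rpredB //; [apply: x_lim.1 | apply: y_lim.1]. Qed.

Lemma z_compatible f g : inPhiS S f -> inPhiS S g -> dvdZ f g -> toC f %| z g - z f.
Proof.
move=> Sf Sg f_g; have [kx [_ def_x]] := x_lim.2 f g Sf Sg f_g.
have [ky [_ def_y]] := y_lim.2 f g Sf Sg f_g.
have -> : z g - z f = (kx - ky) * toC f by rewrite mulrBl -def_x -def_y /z; ring.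
exact: dvdp_mull.
Qed.

Lemma z_dvd_T m f : T m -> inPhiS S f -> dvdZ (Phi m) f -> toC (Phi m) %| z f.
Proof.
move=> Tm Sf m_f; have [k [_ def_z]] := xy_T Tm.
have Sm := inPhiS_Phi (T_S Tm).
rewrite -(subrK (z (Phi m)) (z f)) dvdp_add ?(z_compatible Sm Sf m_f) //.
by rewrite /z def_z dvdp_mull.
Qed.

Lemma z_dvd_prod_T (s : seq nat) f : uniq s -> {in s, forall m, T m} ->
  inPhiS S f -> dvdZ (\prod_(m <- s) Phi m) f -> toC (\prod_(m <- s) Phi m) %| z f.
Proof.
move=> s_uniq T_s Sf s_f; rewrite rmorph_prod.
apply: dvdp_prod_coprime => // [a b a_s b_s | m m_s].
  by apply: coprimep_toC_Phi; apply/S_gt0/T_S/T_s.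
apply: z_dvd_T (T_s m m_s) Sf (dvdZ_trans _ s_f).
by rewrite (big_rem m m_s) /=; apply: dvdZ_mulr.
Qed.

Definition vanishes m := forall E, toC (Phi m) ^+ E %| z (Phi m ^+ E).

Lemma vanishes_dvd m E f : S m -> vanishes m -> inPhiS S f ->
  dvdZ (Phi m ^+ E) f -> toC (Phi m) ^+ E %| z f.
Proof.
move=> Sm m_van Sf mE_f; have := z_compatible (inPhiSX E (inPhiS_Phi Sm)) Sf mE_f.
rewrite rmorphXn => dvd_zf; by rewrite -(subrK (z (Phi m ^+ E)) (z f)) dvdp_add.
Qed.

(* With [G = N a + M b] and [h := z (M * G) %/ toC G] over [R], modulo [M] we have
   [z M = z (M * G) = h * toC G = N * h * toC a]. *)
Lemma vanishes_of_ideal m Ns : S m -> separating Ns ->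
  (forall E r, exists2 N, Ns r N & exists G, [/\ in_ideal N (Phi m ^+ E) G,
     inPhiS S G & toC G %| z (Phi m ^+ E * G)]) ->
  vanishes m.
Proof.
move=> Sm Ns_sep m_G E; rewrite -rmorphXn; set M := Phi m ^+ E.
have SM : inPhiS S M := inPhiSX E (inPhiS_Phi Sm).
apply: dvdp_separating (inPhiS_monic SM) (z_polyOver SM) Ns_sep _ => r.
have [N Ns_N [G [[a [b def_G]] SG G_z]]] := m_G E r; exists N => //.
have SMG := inPhiSM SM SG; set h := z (M * G) %/ toC G.
have [Rh _] := polyOver_divp_monic (monic_map _ (inPhiS_monic SG)) (toC_polyOver G)
  (z_polyOver SMG).
exists (h * toC a); first by rewrite rpredM ?toC_polyOver.
have -> : z M - N%:R *: (h * toC a) = - (z (M * G) - z M) + h * toC b * toC M.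
  by rewrite -{1}(divpK G_z) -/h def_G rmorphD !rmorphM rmorph_nat scaler_nat; ring.
by rewrite dvdp_add ?dvdp_mull // dvdpNr (z_compatible SM SMG (dvdZ_mulr _ _)).
Qed.

Lemma vanishes_transfer m n p d : S m -> S n -> padic_sep R p ->
  in_ideal p (Phi m) (Phi n ^+ d) -> vanishes n -> vanishes m.
Proof.
move=> Sm Sn p_sep mn_p n_van.
apply: (vanishes_of_ideal Sm (separating_expn p_sep)) => E r.
exists (p ^ r)%N => //; exists (Phi n ^+ (d * E * r)); split.
- by rewrite !exprM; apply/in_idealX/in_ideal_exp.
- exact/inPhiSX/inPhiS_Phi.
rewrite rmorphXn; apply: vanishes_dvd (dvdZ_mull _ _) => //.
exact: inPhiSM (inPhiSX _ (inPhiS_Phi Sm)) (inPhiSX _ (inPhiS_Phi Sn)).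
Qed.

Lemma vanishes_relR a b : S a -> S b -> relR R a b -> vanishes a -> vanishes b.
Proof.
move=> Sa Sb [<- // | [[p [[|k] [p_pr [p_sep [def_a | def_b]]]]] | R0]] a_van.
- by move: a_van; rewrite def_a expn0 muln1.
- by rewrite def_b expn0 muln1.
- have [d le_d [c def_Phia]] := Cyclotomic_mul_prime_exp_congr k p_pr (S_gt0 Sb).
  apply: (vanishes_transfer (d := 1) Sb Sa p_sep _ a_van).
  rewrite expr1 -[Phi b]expr1 /Phi def_a; apply: in_ideal_expr_add def_Phia _.
  have p'_gt0 : (0 < p.-1)%N by have := prime_gt1 p_pr; lia.
  by rewrite (leq_trans _ le_d) // muln_gt0 p'_gt0 expn_gt0 prime_gt0.
- have [e _ [c def_Phib]] := Cyclotomic_mul_prime_exp_congr k p_pr (S_gt0 Sa).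
  apply: (vanishes_transfer (d := e) Sb Sa p_sep _ a_van).
  by exists (- c), 1; rewrite /Phi def_b def_Phib; ring.
- by have /eqP := R0 1 (rpred1 _); rewrite oner_eq0.
Qed.

Lemma vanishes_chain a b : chainR R S a b -> vanishes a -> vanishes b.
Proof.
elim=> {a b} // a b c Sa ab bc IH a_van; apply: IH.
by apply: vanishes_relR ab a_van => //; case: bc.
Qed.

Lemma z_dvd_of_vanishes f : (forall m, S m -> vanishes m) -> inPhiS S f -> toC f %| z f.
Proof.
move=> S_van Sf; have [s [S_s def_f]] := Sf.
rewrite {1}def_f -prodr_undup_exp_count rmorph_prod.
apply: dvdp_prod_coprime => [|a b|m]; first exact: undup_uniq.
  rewrite !mem_undup => a_s b_s ab; rewrite !rmorphXn.
  by apply/coprimep_expl/coprimep_expr/coprimep_toC_Phi => //; apply/S_gt0/S_s.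
rewrite mem_undup => m_s; have Sm := S_s m m_s.
rewrite rmorphXn; apply: vanishes_dvd Sm (S_van m Sm) Sf _.
rewrite def_f -prodr_undup_exp_count (bigD1_seq m) ?undup_uniq ?mem_undup //.
exact: dvdZ_mulr.
Qed.

Lemma vanishes_large_primes n : S n ->
  (forall r, exists p k, [/\ (r < p)%N, prime p, padic_sep R p & T (n * p ^ k.+1)%N]) ->
  vanishes n.
Proof.
move=> Sn n_T; apply: (vanishes_of_ideal Sn separating_large_primes) => E r.
have [p [k [lt_p p_pr p_sep T_m]]] := n_T (maxn r E); rewrite gtn_max in lt_p.
case/andP: lt_p => lt_r_p lt_E_p; exists p => //.
have Sm := inPhiS_Phi (T_S T_m).
exists (Phi (n * p ^ k.+1)); split=> //; last first.
  exact: z_dvd_T T_m (inPhiSM (inPhiSX _ (inPhiS_Phi Sn)) Sm) (dvdZ_mull _ _).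
have [d le_d [c def_Phi]] := Cyclotomic_mul_prime_exp_congr k p_pr (S_gt0 Sn).
apply: in_ideal_expr_add def_Phi _; apply: leq_trans le_d.
have : (p.-1 <= p.-1 * p ^ k)%N by rewrite leq_pmulr ?expn_gt0 ?prime_gt0.
by lia.
Qed.

Lemma vanishes_large_exponents n p : S n -> prime p -> padic_sep R p ->
  (forall K, exists2 k, (K < k)%N & T (n * p ^ k.+1)%N) -> vanishes n.
Proof.
move=> Sn p_pr p_sep n_T; apply: (vanishes_of_ideal Sn (separating_expn p_sep)) => E r.
have Phi_ideal k : (E <= k)%N -> in_ideal p (Phi n ^+ E) (Phi (n * p ^ k.+1)).
  move=> le_E_k.
  have [d le_d [c def_Phi]] := Cyclotomic_mul_prime_exp_congr k p_pr (S_gt0 Sn).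
  apply: in_ideal_expr_add def_Phi _; apply: leq_trans le_d.
  have : (k < p ^ k)%N by rewrite ltn_expl ?prime_gt1.
  have : (p ^ k <= p.-1 * p ^ k)%N by rewrite leq_pmull // -ltnS prednK ?prime_gt1 ?prime_gt0.
  by lia.
have [s [size_s s_uniq T_s ideal_s]] : exists s, [/\ size s = r, uniq s,
    {in s, forall m, T m} & {in s, forall m, in_ideal p (Phi n ^+ E) (Phi m)}].
  elim: r => [|r [s [size_s s_uniq T_s ideal_s]]]; first by exists [::].
  have [k lt_k T_m] := n_T (E + \max_(m <- s) m)%N.
  set m := (n * p ^ k.+1)%N in T_m; have lt_s_m : (\max_(i <- s) i < m)%N.
    have : (k.+1 < p ^ k.+1)%N by rewrite ltn_expl ?prime_gt1.
    have : (p ^ k.+1 <= m)%N by rewrite leq_pmull ?S_gt0.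
    by lia.
  exists (m :: s); split => /=; rewrite ?size_s ?s_uniq ?andbT //.
  - apply/negP => m_s; move: lt_s_m; rewrite ltnNge => /negP; apply.
    exact: (@leq_bigmax_seq _ s xpredT id m m_s isT).
  - by move=> i /[!inE] /orP[/eqP -> | /T_s].
  - by move=> i /[!inE] /orP[/eqP -> | /ideal_s //]; apply: Phi_ideal; lia.
have Ss : inPhiS S (\prod_(m <- s) Phi m) by exists s; split => // m /T_s /T_S.
exists (p ^ r)%N => //; exists (\prod_(m <- s) Phi m); split=> //.
  by rewrite -size_s; apply: in_ideal_prod.
exact: z_dvd_prod_T s_uniq T_s (inPhiSM (inPhiSX _ (inPhiS_Phi Sn)) Ss) (dvdZ_mull _ _).
Qed.

Lemma vanishes_base n : S n -> (forall N, exists m, (N < m)%N /\ T m /\ relR R m n) ->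
  vanishes n.
Proof.
move=> Sn n_T; pose P p k := [/\ prime p, padic_sep R p & T (n * p ^ k.+1)%N].
have P_large B : exists p k, P p k /\ ((B < p) || (B < k))%N.
  have n_gt0 := S_gt0 Sn; have [m [lt_m [T_m m_n]]] := n_T (n * B.+1 ^ B.+1)%N.
  have [|p [k [p_pr p_sep def_m]]] := relR_ltn m_n.
    by apply: leq_ltn_trans lt_m; rewrite leq_pmulr ?expn_gt0.
  exists p, k; split; first by rewrite /P -def_m.
  rewrite def_m ltn_pmul2l // in lt_m; apply: contraTT lt_m.
  rewrite negb_or -!leqNgt => /andP[le_p le_k].
  apply: (@leq_trans (B.+1 ^ k.+1)); first by rewrite leq_exp2r // leqW.
  by rewrite leq_pexp2l.
case: (unbounded_pairs P_large) => [P_p | [p P_k]].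
  apply: vanishes_large_primes Sn _ => r.
  by have [p [k [lt_p [p_pr p_sep T_m]]]] := P_p r; exists p, k.
have [_ _ [p_pr p_sep _]] := P_k 0%N.
apply: vanishes_large_exponents Sn p_pr p_sep _ => K.
by have [k lt_k [_ _ T_m]] := P_k K; exists k.
Qed.

Lemma limEq_connected : connectedR R S ->
  (exists n, S n /\ forall N, exists m, (N < m)%N /\ T m /\ relR R m n) ->
  limEq R S x y.
Proof.
move=> [_ S_conn] [n [Sn n_T]] f Sf.
have S_van m : S m -> vanishes m.
  by move=> Sm; apply: vanishes_chain (S_conn n m Sn Sm) (vanishes_base Sn n_T).
apply/(congR_dvdp (inPhiS_monic Sf) (x_lim.1 f Sf) (y_lim.1 f Sf)).
exact: z_dvd_of_vanishes S_van Sf.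
Qed.

End Vanishing.

Lemma tau_injective_connected (S T : nat -> Prop) :
  (forall m, S m -> (0 < m)%N) -> connectedR R S -> (forall m, T m -> S m) ->
  (exists n, S n /\ forall N, exists m, (N < m)%N /\ T m /\ relR R m n) ->
  tau_injective R S T.
Proof.
move=> S_gt0 S_conn T_S n_T x y x_lim y_lim xy_T.
exact: (limEq_connected S_gt0 T_S x_lim y_lim xy_T S_conn n_T).
Qed.

End Subring.

Lemma chainR_trans (R : {pred algC}) (S : nat -> Prop) a b c :
  chainR R S a b -> chainR R S b c -> chainR R S a c.
Proof. by elim=> // {a b} a b b' Sa ab _ IH /IH; apply: chainR_step. Qed.

(* Dividing out the least prime factor links every [a > 0] to [1] in both directions. *)
Lemma connectedR_pos (R : {pred algC}) : (forall p, prime p -> padic_sep R p) ->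
  connectedR R (fun m => (0 < m)%N).
Proof.
move=> R_sep; split=> [|a b a_gt0 b_gt0]; first by exists 1%N.
suff chain1 c : (0 < c)%N ->
    chainR R (fun m => (0 < m)%N) c 1 /\ chainR R (fun m => (0 < m)%N) 1 c.
  by apply: chainR_trans (chain1 a a_gt0).1 (chain1 b b_gt0).2.
elim/ltn_ind: c => c IHc c_gt0; have [c_le1 | c_gt1] := leqP c 1.
  have -> : c = 1%N by lia.
  by split; apply: chainR_refl.
set p := pdiv c; have p_pr : prime p by rewrite pdiv_prime.
have def_c : c = (c %/ p * p)%N by rewrite divnK ?pdiv_dvd.
have cp_gt0 : (0 < c %/ p)%N by rewrite divn_gt0 ?prime_gt0 ?pdiv_leq.
have [cp_1 one_cp] := IHc _ (ltn_Pdiv (prime_gt1 p_pr) c_gt0) cp_gt0.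
have c_cp : relR R c (c %/ p).
  by right; left; exists p, 1%N; do 2!split=> //; [exact: R_sep | left; rewrite expn1 -def_c].
have cp_c : relR R (c %/ p) c.
  by right; left; exists p, 1%N; do 2!split=> //; [exact: R_sep | right; rewrite expn1 -def_c].
split; first exact: chainR_step c_cp cp_1.
by apply: chainR_trans one_cp (chainR_step _ cp_c (chainR_refl _ c_gt0)).
Qed.

Theorem theorem6p1 :
  (forall (R : {pred algC}) (S T : nat -> Prop),
      subring_closed R ->
      (forall m, S m -> (0 < m)%N) ->
      connectedR R S ->
      (forall m, T m -> S m) ->
      (exists n, S n /\ forall N : nat, exists m, (N < m)%N /\ T m /\ relR R m n) ->
      tau_injective R S T) /\
  (forall (R : {pred algC}) (T : nat -> Prop),
      subring_closed R ->
      {subset R <= Aint} ->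
      (forall m, T m -> (0 < m)%N) ->
      (forall N : nat, exists m, (N < m)%N /\ T m /\ prime_power m) ->
      tau_injective R (fun m => (0 < m)%N) T).
Proof.
split=> [R S T R_subring | R T R_subring R_Aint T_gt0 T_pp].
  exact: tau_injective_connected.
have R_sep p : prime p -> padic_sep R p := padic_sep_Aint R_subring R_Aint.
apply: tau_injective_connected => //; first exact: connectedR_pos.
exists 1%N; split=> // N; have [m [lt_m [T_m [p [k [p_pr [_ def_m]]]]]]] := T_pp N.
exists m; do 2!split=> //; right; left; exists p, k.
by do 2!split=> //; [exact: R_sep | left; rewrite mul1n].
Qed.
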